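(* For every information structure $\mathbf q$ (with $\mathbb E[\mathbf q]=p_0$), the following three conditions are equivalent: (i) $\mathrm{VoI}_A(\mathbf q)=0$; (ii) there exists $a^\star\in A^\star(p_0)$ such that $a^\star\in A^\star(\mathbf q)$ $\mathbb P$-almost surely; (iii) $\mathbf q\in \Delta^{c}_A(p_0)$ $\mathbb P$-almost surely.
   Context: Let $K$ be a finite set of states of nature. Signed measures on $K$ are identified with $\mathbb R^K$, with scalar product $\langle s,v\rangle=\sum_{k\in K}s_kv_k$ and Euclidean norm $\|\cdot\|$. Let $\Delta\subset\mathbb R^K$ be the simplex of probability distributions on $K$, and fix a prior $p_0\in\Delta$ with full support. The action set $A\subset\mathbb R^K$ is the closed convex hull $\overline{\mathrm{co}}\{(g(d,k))_{k\in K}: d\in D\}$ for a compact set $D$ and a continuous $g:D\times K\to\mathbb R$; in particular $A$ is a nonempty compact convex subset of $\mathbb R^K$. The value function is $v_A(p)=\max_{a\in A}\langle p,a\rangle$ for $p\in\Delta$. For $p\in\Delta$, the set of optimal actions is $A^\star(p)=\{a\in A:\langle p,a'\rangle\le\langle p,a\rangle\ \forall a'\in A\}$. For $a\in A$, the set of beliefs revealed by $a$ is $\Delta^\star_A(a)=\{p\in\Delta:\langle p,a'\rangle\le\langle p,a\rangle\ \forall a'\in A\}$. The confidence set of $p_0$ is $\Delta^c_A(p_0)=\bigcap_{a\in A^\star(p_0)}\Delta^\star_A(a)$. An information structure is a random variable $\mathbf q$ defined on a probability space $(\Omega,\mathcal F,\mathbb P)$ with values in $\Delta$ such that $\mathbb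 E[\mathbf q]=p_0$. The value of information is $\mathrm{VoI}_A(\mathbf q)=\mathbb E[v_A(\mathbf q)]-v_A(p_0)$. *)

From HB Require Import structures.
From mathcomp Require Import all_boot all_order all_algebra.
From mathcomp Require Import all_classical all_reals all_analysis.
Set Implicit Arguments. Unset Strict Implicit. Unset Printing Implicit Defensive.
Import Order.TTheory GRing.Theory Num.Theory.
Local Open Scope classical_set_scope.
Local Open Scope ring_scope.

Section Defs.
Variables (R : realType) (K : finType).

(* signed measures on K identified with R^K = K -> R *)
Definition dotp (s v : K -> R) : R := \sum_(k : K) s k * v k.

Definition eucl_norm (v : K -> R) : R := Num.sqrt (\sum_(k : K) v k ^+ 2).

Definition simplex : set (K -> R) :=
  [set p | (forall k, 0 <= p k) /\ \sum_(k : K) p k = 1].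

Definition conv_hull (S : set (K -> R)) : set (K -> R) :=
  [set x | exists (n : nat) (w : 'I_n -> R) (s : 'I_n -> (K -> R)),
      (forall i, 0 <= w i) /\ \sum_(i < n) w i = 1 /\ (forall i, S (s i)) /\
      x = (fun k => \sum_(i < n) w i * s i k)].

Definition eucl_closure (S : set (K -> R)) : set (K -> R) :=
  [set x | forall e : R, 0 < e ->
      exists2 y, S y & eucl_norm (fun k => x k - y k) < e].

Definition action_set (D : Type) (g : D -> K -> R) : set (K -> R) :=
  eucl_closure (conv_hull (range g)).

(* value function v_A(p) = max_{a in A} <p,a> (max = sup, A compact) *)
Definition vA (A : set (K -> R)) (p : K -> R) : R :=
  sup [set dotp p a | a in A].

Definition Astar (A : set (K -> R)) (p : K -> R) : set (K -> R) :=
  [set a | A a /\ forall a', A a' -> dotp p a' <= dotp p a].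

Definition Deltastar (A : set (K -> R)) (a : K -> R) : set (K -> R) :=
  [set p | simplex p /\ forall a', A a' -> dotp p a' <= dotp p a].

Definition Delta_c (A : set (K -> R)) (p0 : K -> R) : set (K -> R) :=
  [set p | forall a, Astar A p0 a -> Deltastar A a p].

Definition VoI (d : measure_display) (Omega : measurableType d)
  (P : probability Omega R) (A : set (K -> R)) (p0 : K -> R)
  (q : Omega -> K -> R) : \bar R :=
  (\int[P]_w (vA A (q w))%:E - (vA A p0)%:E)%E.
End Defs.

From HB Require Import structures.
From mathcomp Require Import all_boot all_order all_algebra.
From mathcomp Require Import all_classical all_reals all_analysis.
From mathcomp Require Import measurable_realfun.
From mathcomp Require Import lra.
Import Order.TTheory GRing.Theory Num.Theory numFieldNormedType.Exports.
Local Open Scope classical_set_scope.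
Local Open Scope ring_scope.
Set Implicit Arguments. Unset Strict Implicit. Unset Printing Implicit Defensive.

(** Since [A] is the closed convex hull of the compact image of [g], the
    maximum [v_A(p)] is attained at some [g d], so [v_A] is a bounded
    measurable function of the belief and [v_A(p) - <p, a>] is a nonnegative
    function of [p] for every [a] in [A]. For [a] optimal at [p0] its
    expectation along [q] is [E[v_A(q)] - <p0, a> = VoI(q)], by linearity of
    [<., a>] and [E[q] = p0]. Hence [VoI(q) = 0] iff [a] stays optimal at [q]
    almost surely, which gives (i) <-> (ii). Applying this to every [a] of a
    countable dense subset of [A*(p0)], and using that optimality at [q] is
    a closed condition on [a], gives (iii); conversely (iii) implies (ii) for
    any [a] in [A*(p0)]. *)

Section DotProduct.
Variables (R : realType) (K : finType).
Implicit Types (p x y : K -> R).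

Lemma normr_le_eucl_norm x k : `|x k| <= eucl_norm x.
Proof.
rewrite /eucl_norm -sqrtr_sqr ler_sqrt; last by apply: sumr_ge0 => i _; exact: sqr_ge0.
by rewrite (bigD1 k) //= lerDl; apply: sumr_ge0 => i _; exact: sqr_ge0.
Qed.

Lemma eucl_norm0 : eucl_norm (fun _ : K => 0 : R) = 0.
Proof. by rewrite /eucl_norm big1 ?sqrtr0 // => k _; rewrite expr0n. Qed.

Lemma dotpBr p x y : dotp p (fun k => x k - y k) = dotp p x - dotp p y.
Proof. by rewrite /dotp -sumrB; apply: eq_bigr => k _; rewrite mulrBr. Qed.

Lemma dotp_conv p n (w : 'I_n -> R) (s : 'I_n -> K -> R) :
  dotp p (fun k => \sum_(i < n) w i * s i k) = \sum_(i < n) w i * dotp p (s i).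
Proof.
rewrite /dotp; under eq_bigr do rewrite mulr_sumr.
rewrite exchange_big; apply: eq_bigr => i _; rewrite mulr_sumr.
by apply: eq_bigr => k _; rewrite mulrCA.
Qed.

Lemma dotp_delta x k : dotp (fun j => (j == k)%:R) x = x k.
Proof.
rewrite /dotp (bigD1 k) //= eqxx mul1r big1 ?addr0 // => j /negbTE ->.
by rewrite mul0r.
Qed.

Lemma dotp_Ndelta x k : dotp (fun j => - (j == k)%:R) x = - x k.
Proof.
rewrite /dotp (bigD1 k) //= eqxx mulN1r big1 ?addr0 // => j /negbTE ->.
by rewrite oppr0 mul0r.
Qed.

Lemma simplex_le1 p k : simplex p -> p k <= 1.
Proof.
by move=> [p_ge0 <-]; rewrite (bigD1 k) //= lerDl; apply: sumr_ge0.
Qed.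

Lemma simplex_dotp_norm_le p x e : simplex p ->
  (forall k, `|x k| <= e) -> `|dotp p x| <= e.
Proof.
move=> [p_ge0 p_sum1] x_le; apply: (le_trans (ler_norm_sum _ _ _)).
apply: (@le_trans _ _ (\sum_k p k * e)); last by rewrite -mulr_suml p_sum1 mul1r.
by apply: ler_sum => k _; rewrite normrM ger0_norm //; exact: ler_wpM2l.
Qed.

Lemma simplex_dotp_le_approx p x y e : simplex p ->
  (forall k, `|x k - y k| <= e) -> dotp p x <= dotp p y + e.
Proof.
move=> sp /(simplex_dotp_norm_le sp); rewrite dotpBr -lerBlDl.
exact: le_trans (ler_norm _).
Qed.

Lemma simplex_dotp_norm_le_sum p x : simplex p -> `|dotp p x| <= \sum_k `|x k|.
Proof.
move=> sp; apply: simplex_dotp_norm_le => // k.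
by rewrite (bigD1 k) //= lerDl; apply: sumr_ge0.
Qed.

End DotProduct.

Section DenseSequence.
Variables (R : realType) (K : finType).

Lemma floor_approx (x : R) (m : nat) :
  `|x - (Num.floor (x * m.+1%:R))%:~R / m.+1%:R| < m.+1%:R^-1.
Proof.
set N : R := m.+1%:R.
have N_gt0 : 0 < N by rewrite ltr0n.
have -> : x - (Num.floor (x * N))%:~R / N = (x * N - (Num.floor (x * N))%:~R) / N.
  by rewrite mulrBl mulfK // gt_eqF.
rewrite normrM [`|N^-1|]gtr0_norm ?invr_gt0 // -[X in _ < X]mul1r ltr_pM2r ?invr_gt0 //.
rewrite ger0_norm; last by rewrite subr_ge0 floor_le.
by rewrite ltrBlDl; have := floorD1_gt (x * N); rewrite intrD.
Qed.

(* Index the grid points [z / (m+1)], [z : K -> int], and pick in [S] a point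
   of the grid cell of each index when there is one. *)
Lemma exists_dense_seq (S : set (K -> R)) : S !=set0 -> exists c : nat -> K -> R,
  (forall n, S (c n)) /\
  (forall a, S a -> forall e, 0 < e -> exists n, forall k, `|a k - c n k| < e).
Proof.
move=> [a0 Sa0].
pose near_grid (i : ({ffun K -> int} * nat)%type) (b : K -> R) := S b /\
  forall k, `|b k - (i.1 k)%:~R / (i.2.+1)%:R| < (i.2.+1)%:R^-1.
pose pick i : K -> R := if pselect (exists b, near_grid i b) is left H
  then proj1_sig (cid H) else a0.
have pickP i : (exists b, near_grid i b) -> near_grid i (pick i).
  by rewrite /pick; case: pselect => // H _; exact: (proj2_sig (cid H)).
have S_pick i : S (pick i).
  by rewrite /pick; case: pselect => [H|//]; exact: (proj2_sig (cid H)).1.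
pose c n := if @unpickle ({ffun K -> int} * nat)%type n is Some i then pick i else a0.
exists c; split=> [n|a Sa e e_gt0]; first by rewrite /c; case: unpickle.
pose m := Num.truncn (2 / e).
pose i := ([ffun k => Num.floor (a k * m.+1%:R)], m).
exists (pickle i); rewrite /c pickleK.
have /pickP [_ pick_near] : exists b, near_grid i b.
  by exists a; split=> // k; rewrite /i /= ffunE; exact: floor_approx.
move=> k; have := pick_near k; rewrite /i /= ffunE => pick_k.
have a_k := floor_approx (a k) m.
have two_lt_e : 2 / m.+1%:R < e.
  by rewrite ltr_pdivrMr ?ltr0n // mulrC -ltr_pdivrMr //; exact: truncnS_gt.
apply: le_lt_trans two_lt_e.
rewrite -[X in _ <= X / _]/(1 + 1) mulrDl mul1r.
set z := _ / _ in pick_k a_k.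
have -> : a k - pick i k = (a k - z) - (pick i k - z) by rewrite opprB addrA subrK.
by apply: (le_trans (ler_normB _ _)); rewrite lerD // ltW.
Qed.

End DenseSequence.

Section ActionSet.
Variables (R : realType) (K : finType) (D : Type) (g : D -> K -> R).
Implicit Types (p : K -> R) (S : set (K -> R)).

Lemma conv_hull_sub S : S `<=` conv_hull S.
Proof.
move=> s Ss; exists 1%N, (fun _ => 1), (fun _ => s).
do !split=> //; first by rewrite big_ord1.
by apply/funext => k; rewrite big_ord1 mul1r.
Qed.

Lemma eucl_closure_sub S : S `<=` eucl_closure S.
Proof.
move=> s Ss e e_gt0; exists s => //.
by under eq_fun do rewrite subrr; rewrite eucl_norm0.
Qed.

Lemma action_set_g d : action_set g (g d).
Proof. by apply/eucl_closure_sub/conv_hull_sub; exists d. Qed.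

Lemma dotp_le_conv_hull p S c : (forall s, S s -> dotp p s <= c) ->
  forall a, conv_hull S a -> dotp p a <= c.
Proof.
move=> S_le _ [n [w [s [w_ge0 [w_sum1 [Ss ->]]]]]]; rewrite dotp_conv.
apply: (@le_trans _ _ (\sum_(i < n) w i * c)); last by rewrite -mulr_suml w_sum1 mul1r.
by apply: ler_sum => i _; apply: ler_wpM2l => //; exact: S_le.
Qed.

Lemma dotp_le_eucl_closure p S c : simplex p -> (forall s, S s -> dotp p s <= c) ->
  forall a, eucl_closure S a -> dotp p a <= c.
Proof.
move=> sp S_le a Sa; apply/ler_addgt0Pr => e e_gt0.
have [y Sy a_near] := Sa e e_gt0.
apply: le_trans (simplex_dotp_le_approx sp _) _.
  by move=> k; exact/ltW/(le_lt_trans (normr_le_eucl_norm _ k) a_near).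
by rewrite lerD2r S_le.
Qed.

Lemma dotp_le_action_set p c : simplex p -> (forall d, dotp p (g d) <= c) ->
  forall a, action_set g a -> dotp p a <= c.
Proof.
move=> sp g_le; apply: dotp_le_eucl_closure => //.
by apply: dotp_le_conv_hull => _ [d _ <-].
Qed.

Lemma vA_argmax p d : simplex p -> (forall d', dotp p (g d') <= dotp p (g d)) ->
  vA (action_set g) p = dotp p (g d).
Proof.
move=> sp d_max; have A_le := dotp_le_action_set sp d_max.
apply/le_anti/andP; split.
  apply: ge_sup => [|_ [a Aa <-]]; last exact: A_le.
  by exists (dotp p (g d)), (g d); first exact: action_set_g.
apply: ub_le_sup; last by exists (g d); first exact: action_set_g.
by exists (dotp p (g d)) => _ [a Aa <-]; exact: A_le.
Qed.

Lemma Astar_argmax p d : simplex p -> (forall d', dotp p (g d') <= dotp p (g d)) ->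
  Astar (action_set g) p (g d).
Proof. by move=> sp d_max; split; [exact: action_set_g | exact: dotp_le_action_set]. Qed.

End ActionSet.

Section CompactActionSet.
Variables (R : realType) (K : finType) (D : topologicalType) (g : D -> K -> R).
Hypotheses (D_compact : compact [set: D]) (D_nonempty : [set: D] !=set0)
  (g_cont : forall k : K, continuous (fun d => g d k)).
Local Notation A := (action_set g).
Implicit Types (p a : K -> R).

Lemma continuous_dotp_g p : continuous (fun d => dotp p (g d)).
Proof.
rewrite /dotp; elim: (index_enum K) => [|k s IH].
  by under eq_fun do rewrite big_nil; exact: cst_continuous.
under eq_fun do rewrite big_cons.
move=> d; apply: (@continuousD _ _ _ (fun d => p k * g d k)); last exact: IH.
by apply: (@continuousM _ _ (fun _ => p k)); [exact: cst_continuous | exact: g_cont].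
Qed.

Lemma exists_argmax_dotp p : exists d, forall d', dotp p (g d') <= dotp p (g d).
Proof.
have [d _ d_max] := compact_EVT_max D_nonempty D_compact
  (continuous_subspaceT (@continuous_dotp_g p)).
by exists d => d'; apply: d_max; rewrite inE.
Qed.

Lemma exists_Astar p : simplex p -> exists a, Astar A p a /\ vA A p = dotp p a.
Proof.
move=> sp; have [d d_max] := exists_argmax_dotp p.
by exists (g d); split; [exact: Astar_argmax | exact: vA_argmax].
Qed.

Lemma vA_Astar p a : simplex p -> Astar A p a -> vA A p = dotp p a.
Proof.
move=> sp [Aa a_max]; have [b [[Ab b_max] ->]] := exists_Astar sp.
by apply/le_anti; rewrite a_max // b_max.
Qed.

Lemma dotp_le_vA p a : simplex p -> A a -> dotp p a <= vA A p.
Proof. by move=> sp Aa; have [b [[_ b_max] ->]] := exists_Astar sp; exact: b_max. Qed.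

Lemma Astar_of_vA p a : simplex p -> A a -> vA A p <= dotp p a -> Astar A p a.
Proof. by move=> sp Aa v_le; split=> // b Ab; exact: le_trans (dotp_le_vA sp Ab) v_le. Qed.

(* The extreme values of the coordinates [g d k] are attained at the argmax
   of the directions [+-e_k]. *)
Lemma exists_g_bound : exists M, forall d k, `|g d k| <= M.
Proof.
have [dM dM_max] := choice (fun k => exists_argmax_dotp (fun j => (j == k)%:R)).
have [dm dm_max] := choice (fun k => exists_argmax_dotp (fun j => - (j == k)%:R)).
exists (\sum_k (`|g (dM k) k| + `|g (dm k) k|)) => d k.
apply: (@le_trans _ _ (`|g (dM k) k| + `|g (dm k) k|)); last first.
  by rewrite (bigD1 k) //= lerDl; apply: sumr_ge0 => j _; rewrite addr_ge0.
have := dM_max k d; rewrite !dotp_delta => le_max.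
have := dm_max k d; rewrite !dotp_Ndelta lerN2 => ge_min.
have := ler_norm (g (dM k) k); have := ler_norm (- g (dm k) k); rewrite normrN.
have := normr_ge0 (g (dM k) k); have := normr_ge0 (g (dm k) k).
by rewrite ler_norml; move=> *; apply/andP; split; lra.
Qed.

Lemma exists_vA_bound : exists M, forall p, simplex p -> `|vA A p| <= M.
Proof.
have [M g_le] := exists_g_bound.
exists M => p sp; have [d d_max] := exists_argmax_dotp p.
by rewrite (vA_argmax sp d_max); exact: simplex_dotp_norm_le.
Qed.

Lemma vA_sups (c : nat -> K -> R) : (forall n, A (c n)) ->
  (forall a, A a -> forall e, 0 < e -> exists n, forall k, `|a k - c n k| < e) ->
  forall p, simplex p -> vA A p = sups (fun n => dotp p (c n)) 0%N.
Proof.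
move=> Ac c_dense p sp; have [a [[Aa a_max] ->]] := exists_Astar sp.
rewrite /sups /=; apply/le_anti/andP; split.
  apply/ler_addgt0Pr => e e_gt0; have [n c_near] := c_dense a Aa e e_gt0.
  apply: le_trans (simplex_dotp_le_approx (y := c n) sp (fun k => ltW (c_near k))) _.
  rewrite lerD2r; apply: ub_le_sup; last by exists n.
  by exists (dotp p a) => _ [m _ <-]; exact: a_max.
apply: ge_sup; first by exists (dotp p (c 0%N)), 0%N.
by move=> _ [m _ <-]; exact: a_max.
Qed.

End CompactActionSet.

Section Expectation.
Variables (R : realType) (K : finType).
Variables (dOm : measure_display) (Omega : measurableType dOm)
  (P : probability Omega R) (q : Omega -> K -> R).
Hypotheses (q_meas : forall k, measurable_fun [set: Omega] (fun w => q w k))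
  (q_simplex : forall w, simplex (q w)).

Lemma integrable_bounded (f : Omega -> R) M : measurable_fun setT f ->
  (forall w, `|f w| <= M) -> P.-integrable setT (EFin \o f).
Proof.
move=> mf f_le.
apply: (le_integrable measurableT _ _ (finite_measure_integrable_cst P M measurableT)).
  exact/measurable_EFinP.
move=> w _ /=; rewrite lee_fin; apply: (le_trans (f_le w)).
by rewrite ger0_norm // (le_trans _ (f_le w)).
Qed.

Lemma measurable_dotp_q (b : K -> R) : measurable_fun setT (fun w => dotp (q w) b).
Proof.
apply: (@measurable_sum _ _ _ _ _ _ (fun k w => q w k * b k)) => k.
exact: measurable_funM (q_meas k) (measurable_cst (b k)).
Qed.

Lemma integrable_q k : P.-integrable setT (EFin \o (fun w => q w k)).
Proof.
apply: (integrable_bounded (M := 1)) => [|w]; first exact: q_meas.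
by have [q_ge0 _] := q_simplex w; rewrite ger0_norm // simplex_le1.
Qed.

Lemma integrable_dotp_q (b : K -> R) : P.-integrable setT (EFin \o (fun w => dotp (q w) b)).
Proof.
apply: (integrable_bounded (M := \sum_k `|b k|)); first exact: measurable_dotp_q.
by move=> w; exact: simplex_dotp_norm_le_sum.
Qed.

Variable (p0 : K -> R).
Hypothesis (q_mean : forall k, (\int[P]_w (q w k)%:E = (p0 k)%:E)%E).

Lemma integral_dotp_q (b : K -> R) :
  (\int[P]_w (dotp (q w) b)%:E = (dotp p0 b)%:E)%E.
Proof.
transitivity (\int[P]_w (\sum_(k : K) ((b k)%:E * (q w k)%:E)))%E.
  apply: eq_integral => w _; rewrite /dotp -sumEFin.
  by apply: eq_bigr => k _; rewrite mulrC EFinM.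
rewrite integral_sum //; last by move=> k; apply: integrableZl => //; exact: integrable_q.
rewrite /dotp -sumEFin; apply: eq_bigr => k _.
by rewrite integralZl //; [rewrite q_mean -EFinM mulrC | exact: integrable_q].
Qed.

End Expectation.

Section ValueOfInformation.
Variables (R : realType) (K : finType) (D : topologicalType) (g : D -> K -> R).
Hypotheses (D_compact : compact [set: D]) (D_nonempty : [set: D] !=set0)
  (g_cont : forall k : K, continuous (fun d => g d k)).
Variables (p0 : K -> R) (dOm : measure_display) (Omega : measurableType dOm)
  (P : probability Omega R) (q : Omega -> K -> R).
Hypotheses (p0_simplex : simplex p0)
  (q_meas : forall k, measurable_fun [set: Omega] (fun w => q w k))
  (q_simplex : forall w, simplex (q w))
  (q_mean : forall k, (\int[P]_w (q w k)%:E = (p0 k)%:E)%E).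
Local Notation A := (action_set g).
Implicit Types (a : K -> R).

Lemma measurable_vA_q : measurable_fun setT (fun w => vA A (q w)).
Proof.
have [d0 _] := D_nonempty.
have [c [Ac c_dense]] := exists_dense_seq (ex_intro _ _ (action_set_g g d0)).
rewrite (funext (fun w => vA_sups D_compact D_nonempty g_cont Ac c_dense (q_simplex w))).
apply: (measurable_fun_sups (h := fun n w => dotp (q w) (c n))).
  move=> w _; exists (vA A (q w)) => _ [n _ <-].
  exact: (dotp_le_vA D_compact D_nonempty g_cont (q_simplex w) (Ac n)).
by move=> n; exact: measurable_dotp_q.
Qed.

Lemma integrable_vA_q : P.-integrable setT (EFin \o (fun w => vA A (q w))).
Proof.
have [M vA_le] := exists_vA_bound D_compact D_nonempty g_cont.
by apply: (integrable_bounded P (M := M)) => [|w]; [exact: measurable_vA_q | exact: vA_le].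
Qed.

Lemma VoI_Astar a : Astar A p0 a ->
  VoI P A p0 q = (\int[P]_w (vA A (q w) - dotp (q w) a)%:E)%E.
Proof.
move=> a_opt; rewrite /VoI (vA_Astar D_compact D_nonempty g_cont p0_simplex a_opt).
rewrite -(integral_dotp_q q_meas q_simplex q_mean) -integralB_EFin //.
- exact: integrable_vA_q.
- exact: integrable_dotp_q.
Qed.

Lemma VoI_eq0_of_Astar_ae a : Astar A p0 a -> {ae P, forall w, Astar A (q w) a} ->
  VoI P A p0 q = 0%E.
Proof.
move=> a_opt a_opt_ae; rewrite (VoI_Astar a_opt) -(integral0 P setT).
apply: ae_eq_integral => //.
  by apply/measurable_EFinP/measurable_funB; [exact: measurable_vA_q | exact: measurable_dotp_q].
apply: filterS a_opt_ae => w a_opt_w _.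
by rewrite (vA_Astar D_compact D_nonempty g_cont (q_simplex w) a_opt_w) subrr.
Qed.

Lemma Astar_ae_of_VoI_eq0 a : Astar A p0 a -> VoI P A p0 q = 0%E ->
  {ae P, forall w, Astar A (q w) a}.
Proof.
move=> a_opt; rewrite (VoI_Astar a_opt) => int_gap0.
have Aa : A a by case: a_opt.
have gap_ge0 w : 0 <= vA A (q w) - dotp (q w) a.
  by rewrite subr_ge0; exact: dotp_le_vA.
have m_gap : measurable_fun setT (fun w => (vA A (q w) - dotp (q w) a)%:E).
  by apply/measurable_EFinP/measurable_funB; [exact: measurable_vA_q | exact: measurable_dotp_q].
have : (\int[P]_w `|(vA A (q w) - dotp (q w) a)%:E| = 0)%E.
  by rewrite -int_gap0; apply: eq_integral => w _; rewrite /= ger0_norm.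
move/(ae_eq_integral_abs P measurableT m_gap).1; apply: filterS => w /(_ I) [gap0].
apply: (Astar_of_vA D_compact D_nonempty g_cont (q_simplex w) Aa).
by move/eqP: gap0; rewrite subr_eq0 => /eqP ->.
Qed.

Lemma Delta_c_ae_of_VoI_eq0 : VoI P A p0 q = 0%E ->
  {ae P, forall w, Delta_c A p0 (q w)}.
Proof.
move=> VoI0; have [a [a_opt _]] := exists_Astar D_compact D_nonempty g_cont p0_simplex.
have [c [c_opt c_dense]] := exists_dense_seq (ex_intro _ a a_opt).
have := ae_foralln (fun n => Astar_ae_of_VoI_eq0 (c_opt n) VoI0).
apply: filterS => w c_opt_w b b_opt; split=> // a' Aa'.
apply/ler_addgt0Pr => e e_gt0; have [n c_near] := c_dense b b_opt e e_gt0.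
apply: le_trans ((c_opt_w n).2 a' Aa') _.
by apply: simplex_dotp_le_approx => // k; rewrite distrC; exact/ltW.
Qed.

End ValueOfInformation.

Theorem proposition3p1 (R : realType) (K : finType)
  (D : topologicalType) (g : D -> K -> R)
  (D_compact : compact [set: D]) (D_nonempty : [set: D] !=set0)
  (g_cont : forall k : K, continuous (fun d => g d k))
  (p0 : K -> R) (p0_simplex : simplex p0) (p0_full : forall k, 0 < p0 k)
  (dOm : measure_display) (Omega : measurableType dOm)
  (P : probability Omega R) (q : Omega -> K -> R)
  (q_meas : forall k, measurable_fun [set: Omega] (fun w => q w k))
  (q_simplex : forall w, simplex (q w))
  (q_mean : forall k, (\int[P]_w (q w k)%:E = (p0 k)%:E)%E) :
  let A := action_set g in
  [<-> VoI P A p0 q = 0%E;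
       exists2 astar, Astar A p0 astar &
         {ae P, forall w, Astar A (q w) astar};
       {ae P, forall w, Delta_c A p0 (q w)}].
Proof.
have [a [a_opt _]] := exists_Astar D_compact D_nonempty g_cont p0_simplex.
move=> A; rewrite {}/A; tfae.
- move=> VoI0; exists a => //.
  exact: (Astar_ae_of_VoI_eq0 D_compact D_nonempty g_cont p0_simplex
    q_meas q_simplex q_mean a_opt VoI0).
- case=> b b_opt b_opt_ae.
  apply: (Delta_c_ae_of_VoI_eq0 D_compact D_nonempty g_cont p0_simplex
    q_meas q_simplex q_mean).
  exact: (VoI_eq0_of_Astar_ae D_compact D_nonempty g_cont p0_simplex
    q_meas q_simplex q_mean b_opt b_opt_ae).
- move=> conf_ae; apply: (VoI_eq0_of_Astar_ae D_compact D_nonempty g_cont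
    p0_simplex q_meas q_simplex q_mean a_opt).
  apply: filterS conf_ae => w conf_w.
  by have [_ a_max] := conf_w a a_opt; split; [case: a_opt | exact: a_max].
Qed.
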